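(* For all integers $N\ge 2$ and $1\le k\le N-1$, $$\mathbb{E}[\mathcal{N}_k(N)]=\frac{N}{k(k+1)},$$ while $\mathcal{N}_N(N)=1$ (the vertex $v_1$ is the unique vertex of degree $N$).
   Context: A random recursive hypergraph (RRH) is the random hypergraph process defined as follows. At size $N=1$ it has vertex set $\{v_1\}$ and edge set $\{\{v_1\}\}$. Given the hypergraph of size $N$ (vertices $v_1,\dots,v_N$, exactly $N$ edges), one chooses an existing edge $e$ uniformly at random, independently of the past, and adds a new vertex $v_{N+1}$ together with the new edge $e\cup\{v_{N+1}\}$. The degree of a vertex is the number of edges containing it. $\mathcal{N}_k(N)$ denotes the number of vertices of degree $k$ in the RRH of size $N$. *)

From mathcomp Require Import all_boot all_order all_algebra.
Set Implicit Arguments. Unset Strict Implicit. Unset Printing Implicit Defensive.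
Import GRing.Theory Num.Theory.

(* Vertices v_1, ..., v_N are encoded as the naturals 0, ..., N-1
   (v_{i+1} is encoded as i).  A hypergraph is the sequence of its edges
   (in order of creation), each edge being a seq of vertices. *)

Definition rrh_init : seq (seq nat) := [:: [:: 0%N]].

Definition rrh_step (E : seq (seq nat)) (j : nat) : seq (seq nat) :=
  rcons E (rcons (nth [::] E j) (size E)).

Definition rrh (s : seq nat) : seq (seq nat) := foldl rrh_step rrh_init s.

(* Sample space for the RRH of size N: the i-th step (from size i+1 to
   size i+2, i = 0..N-2) chooses one of the i+1 existing edges, uniformly and
   independently; an outcome is thus a dependent finite function. *)
Definition outcome (N : nat) := {dffun forall i : 'I_N.-1, 'I_i.+1}.

Definition choices_of (N : nat) (f : outcome N) : seq nat :=
  [seq nat_of_ord (f i) | i <- enum 'I_N.-1].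

Definition rrh_of (N : nat) (f : outcome N) : seq (seq nat) :=
  rrh (choices_of f).

Definition degree (E : seq (seq nat)) (v : nat) : nat :=
  count (fun e => v \in e) E.

Definition Ncount (N : nat) (E : seq (seq nat)) (k : nat) : nat :=
  count (fun v => degree E v == k) (iota 0 N).

Definition ENk (N k : nat) : rat :=
  (\sum_(f : outcome N) (Ncount N (rrh_of f) k)%:R) / (#|outcome N|)%:R.

From mathcomp Require Import all_boot all_order all_algebra.
From mathcomp Require Import zify ring.

(* Write T(n, k) for the sum of N_k over all n! valid choice sequences of
   length n, i.e. n! E[N_k] in the RRH of size n+1.  The proof has three parts.
   1. One growth step, averaged over the chosen edge: a vertex of degree d lies
      in d of the m current edges, so summing N_k over the m choices gives
      (k-1) N_{k-1} + (m-k) N_k + m [k = 1]  (sum_Ncount_after_step).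
   2. Outcomes of size N correspond bijectively to valid choice sequences of
      length N-1, enumerated by [choice_seqs]; summing step 1 over them gives
      T(n+1, k) = (k-1) T(n, k-1) + (n+1-k) T(n, k) + (n+1) [k = 1] n!, and
      induction on n yields k (k+1) T(n, k) = (n+1)! for 1 <= k <= n
      (total_count_closed), which is the expectation formula.
   3. Deterministically, v_1 lies in every edge, while every other vertex
      misses the first edge {v_1}; hence v_1 is the unique vertex of degree N
      (Ncount_top_degree). *)

(* Every vertex of E is below size E.  The RRH keeps this invariant, so the
   vertex added by a step is fresh and has degree 1 afterwards. *)
Definition vertices_below_size (E : seq (seq nat)) : bool :=
  all (fun e => all (fun v => v < size E) e) E.

Lemma degree_rcons E e v : degree (rcons E e) v = degree E v + (v \in e).
Proof. by rewrite /degree -cats1 count_cat /= addn0. Qed.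

Lemma degree_fresh E : vertices_below_size E -> degree E (size E) = 0.
Proof.
move=> /allP HE; apply/eqP; rewrite /degree -leqn0 leqNgt -has_count.
by apply/hasP => -[e /HE /allP He /He]; rewrite ltnn.
Qed.

Lemma vertices_below_size_step E j :
  vertices_below_size E -> vertices_below_size (rrh_step E j).
Proof.
move=> /allP HE; apply/allP => e; rewrite /rrh_step size_rcons mem_rcons inE.
case/orP => [/eqP -> | /HE /allP He]; apply/allP => v; last by move/He/ltnW.
rewrite mem_rcons inE => /orP [/eqP -> //|].
case: (ltnP j (size E)) => hj; last by rewrite nth_default.
by move/(allP (HE _ (mem_nth [::] hj)))/ltnW.
Qed.

Lemma degree_step_old E j v : v < size E ->
  degree (rrh_step E j) v = degree E v + (v \in nth [::] E j).
Proof. by move=> hv; rewrite degree_rcons mem_rcons inE (ltn_eqF hv). Qed.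

Lemma degree_step_new E j :
  vertices_below_size E -> degree (rrh_step E j) (size E) = 1.
Proof. by move=> HE; rewrite degree_rcons degree_fresh // mem_rcons inE eqxx. Qed.

Lemma count_as_sum (T : Type) (a : pred T) (s : seq T) :
  count a s = \sum_(x <- s) (a x : nat).
Proof. by elim: s => [|x s IH]; rewrite ?big_nil ?big_cons //= IH. Qed.

Lemma sum_shift_by_indicator (T : Type) (r : seq T) (p : pred T) a k :
  \sum_(x <- r) ((a + p x) == k : nat) =
  count p r * (a.+1 == k) + (size r - count p r) * (a == k).
Proof.
elim: r => [|x r IH]; first by rewrite big_nil.
rewrite big_cons IH /=; case: (p x) => /=; first by rewrite addn1 mulSn addnA.
rewrite addn0 add0n subSn ?count_size // mulSn; lia.
Qed.

(* Averaging over the chosen edge: a vertex of degree d lies in exactly d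
   edges, so it reaches degree k from degree k-1 along k-1 choices and keeps
   degree k along the other size E - k choices. *)
Lemma sum_degree_after_step E v k : 0 < k ->
  \sum_(e <- E) ((degree E v + (v \in e)) == k : nat) =
  k.-1 * (degree E v == k.-1) + (size E - k) * (degree E v == k).
Proof.
move=> hk; rewrite sum_shift_by_indicator -/(degree E v).
case: k hk => // k _; rewrite eqSS /=.
by congr (_ + _); case: eqP => [->|]; rewrite ?muln0 ?muln1.
Qed.

Lemma sum_Ncount_after_step E k : vertices_below_size E -> 0 < k ->
  \sum_(j < size E) Ncount (size E).+1 (rrh_step E j) k =
  k.-1 * Ncount (size E) E k.-1 + (size E - k) * Ncount (size E) E k
  + size E * (k == 1).
Proof.
move=> HE hk; set m := size E.
have split_new j : Ncount m.+1 (rrh_step E j) k =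
    \sum_(v <- iota 0 m) ((degree E v + (v \in nth [::] E j)) == k : nat)
    + (k == 1).
  rewrite /Ncount -addn1 iotaD count_cat /= add0n addn0 degree_step_new //.
  rewrite [1 == k]eq_sym count_as_sum big_seq [in RHS]big_seq.
  by congr (_ + _); apply: eq_bigr => v; rewrite mem_iota => /degree_step_old ->.
rewrite (eq_bigr _ (fun (j : 'I_m) _ => split_new j)) big_split /=.
rewrite sum_nat_const card_ord exchange_big /=; congr (_ + _).
rewrite (eq_bigr (fun v => k.-1 * (degree E v == k.-1)
                          + (m - k) * (degree E v == k))); last first.
  move=> v _; rewrite -sum_degree_after_step // (big_nth [::]) big_mkord.
  by apply: eq_bigr.
by rewrite big_split /= -!big_distrr /= /Ncount !count_as_sum.
Qed.

Lemma rrh_rcons s j : rrh (rcons s j) = rrh_step (rrh s) j.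
Proof. exact: foldl_rcons. Qed.

Lemma size_rrh s : size (rrh s) = (size s).+1.
Proof.
elim/last_ind: s => [|s j IH] //.
by rewrite rrh_rcons /rrh_step !size_rcons IH.
Qed.

Lemma vertices_below_size_rrh s : vertices_below_size (rrh s).
Proof.
elim/last_ind: s => [|s j IH] //.
by rewrite rrh_rcons; apply: vertices_below_size_step.
Qed.

Lemma rrh_first_edge s : exists E, rrh s = [:: 0] :: E.
Proof.
elim/last_ind: s => [|s j [E IH]]; first by exists [::].
by rewrite rrh_rcons /rrh_step IH; eexists.
Qed.

(* A choice sequence is valid when its i-th entry picks one of the i+1 edges
   existing at step i; these are exactly the sequences produced by outcomes. *)
Definition valid_choices (s : seq nat) : bool :=
  all (fun i => nth 0 s i <= i) (iota 0 (size s)).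

Lemma valid_choices_rcons s j :
  valid_choices (rcons s j) = valid_choices s && (j <= size s).
Proof.
rewrite /valid_choices size_rcons -addn1 iotaD all_cat /= andbT add0n.
rewrite nth_rcons ltnn eqxx; congr andb; apply: eq_in_all => i.
by rewrite mem_iota add0n => /andP [_ hi]; rewrite nth_rcons hi.
Qed.

(* Every edge is grown from the first one, so v_1 lies in all edges. *)
Lemma root_in_every_edge s : valid_choices s -> all (fun e => 0 \in e) (rrh s).
Proof.
elim/last_ind: s => [|s j IH] //; rewrite valid_choices_rcons => /andP [Hs hj].
have H0 := IH Hs; rewrite rrh_rcons /rrh_step all_rcons H0 andbT mem_rcons inE.
by rewrite (allP H0) ?orbT // mem_nth // size_rrh.
Qed.

(* In the RRH of size N, v_1 has degree N and is the only vertex of degree N,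
   as every other vertex misses the first edge. *)
Lemma Ncount_top_degree s : valid_choices s ->
  degree (rrh s) 0 = (size s).+1 /\ Ncount (size s).+1 (rrh s) (size s).+1 = 1.
Proof.
move=> Hs; have deg0 : degree (rrh s) 0 = (size s).+1.
  by rewrite -size_rrh; apply/eqP; rewrite -all_count root_in_every_edge.
split => //; rewrite /Ncount -[iota _ _]/(0 :: iota 1 (size s)) /= deg0 eqxx.
rewrite -[RHS]addn0; congr (_ + _); apply/eqP; rewrite -leqn0 leqNgt -has_count.
apply/hasP => -[v]; rewrite mem_iota => /andP [v_gt0 _].
have [E rrhE] := rrh_first_edge s.
have sizeE : size E = size s by move: (size_rrh s); rewrite rrhE => -[].
rewrite rrhE /degree /= inE eqn0Ngt v_gt0 add0n -sizeE => /eqP deg_v.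
by have := count_size (fun e => v \in e) E; rewrite deg_v ltnn.
Qed.

Fixpoint choice_seqs (n : nat) : seq (seq nat) :=
  if n is n'.+1 then [seq rcons s j | s <- choice_seqs n', j <- iota 0 n]
  else [:: [::]].

Lemma choice_seqsS n :
  choice_seqs n.+1 = [seq rcons s j | s <- choice_seqs n, j <- iota 0 n.+1].
Proof. by []. Qed.

Lemma rcons_inj2 {T : Type} (s t : seq T) i j :
  rcons s i = rcons t j -> s = t /\ i = j.
Proof.
move/(congr1 (@rev T)); rewrite !rev_rcons => -[-> /(congr1 (@rev T))].
by rewrite !revK.
Qed.

Lemma mem_choice_seqs n s :
  (s \in choice_seqs n) = (size s == n) && valid_choices s.
Proof.
elim: n s => [|n IH] s; first by case: s.
rewrite choice_seqsS; case/lastP: s => [|s j].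
  by apply/allpairsP => -[[t i] [_ _]]; case: t.
rewrite size_rcons eqSS valid_choices_rcons andbA -IH.
apply/allpairsP/andP => [[[t i] [Ht Hi /(@rcons_inj2 nat) [-> ->]]]|[Hs Hj]].
  by split => //; move: Ht Hi; rewrite IH mem_iota => /andP [/eqP -> _].
exists (s, j); split=> //; rewrite mem_iota /=.
by move: Hs Hj; rewrite IH => /andP [/eqP ->].
Qed.

Lemma uniq_choice_seqs n : uniq (choice_seqs n).
Proof.
elim: n => [|n IH] //; rewrite choice_seqsS.
apply: allpairs_uniq => //; first exact: iota_uniq.
by move=> [s i] [t j] _ _ /= /(@rcons_inj2 nat) [-> ->].
Qed.

Lemma size_choice_seqs n : size (choice_seqs n) = n`!.
Proof.
elim: n => [|n IH] //.
by rewrite choice_seqsS size_allpairs IH size_iota factS mulnC.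
Qed.

Lemma nth_choices_of N (f : outcome N) (i : 'I_N.-1) :
  nth 0 (choices_of f) i = f i.
Proof.
rewrite /choices_of (nth_map i) ?size_enum_ord //.
by congr (nat_of_ord (f _)); apply: val_inj; rewrite /= nth_enum_ord.
Qed.

Lemma size_choices_of N (f : outcome N) : size (choices_of f) = N.-1.
Proof. by rewrite size_map size_enum_ord. Qed.

Lemma choices_of_inj N : injective (@choices_of N).
Proof.
move=> f g fg; apply/ffunP => i; apply: val_inj.
by rewrite /= -!nth_choices_of fg.
Qed.

Lemma perm_choices_of N :
  perm_eq [seq choices_of f | f <- enum (outcome N)] (choice_seqs N.-1).
Proof.
apply: uniq_perm; rewrite ?uniq_choice_seqs //.
  by rewrite (map_inj_uniq (@choices_of_inj N)) enum_uniq.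
move=> s; rewrite mem_choice_seqs; apply/mapP/andP => [[f _ ->]|[/eqP Hs Hv]].
  rewrite size_choices_of /valid_choices size_choices_of; split=> //.
  apply/allP => i; rewrite mem_iota add0n => /andP [_ Hi].
  by rewrite (nth_choices_of _ f (Ordinal Hi)) -ltnS ltn_ord.
exists [ffun i : 'I_N.-1 => inord (nth 0 s i) : 'I_i.+1]; rewrite ?mem_enum //.
apply: (@eq_from_nth _ 0) => [|i]; rewrite ?size_choices_of Hs // => Hi.
rewrite (nth_choices_of _ _ (Ordinal Hi)) ffunE /= inordK // ltnS.
by apply: (allP Hv); rewrite mem_iota Hs.
Qed.

Lemma sum_over_outcomes (R : Type) (idx : R) (op : Monoid.com_law idx) N
    (F : seq nat -> R) :
  \big[op/idx]_(f : outcome N) F (choices_of f) =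
  \big[op/idx]_(s <- choice_seqs N.-1) F s.
Proof. by rewrite -(perm_big _ (perm_choices_of N)) big_map big_enum. Qed.

(* n! times the expectation of N_k in the RRH of size n+1. *)
Definition total_count (n k : nat) : nat :=
  \sum_(s <- choice_seqs n) Ncount n.+1 (rrh s) k.

Lemma sum_const_choice_seqs n c : \sum_(s <- choice_seqs n) c = c * n`!.
Proof. by rewrite big_const_seq count_predT size_choice_seqs iter_addn_0. Qed.

Lemma total_count_rec n k : 0 < k ->
  total_count n.+1 k = k.-1 * total_count n k.-1 + (n.+1 - k) * total_count n k
                       + n.+1 * (k == 1) * n`!.
Proof.
move=> k_gt0; rewrite /total_count choice_seqsS big_allpairs_dep.
rewrite !big_distrr -sum_const_choice_seqs -!big_split big_seq [RHS]big_seq.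
apply: eq_bigr => s; rewrite mem_choice_seqs => /andP [/eqP size_s _].
have size_rrh_s : size (rrh s) = n.+1 by rewrite size_rrh size_s.
rewrite -size_rrh_s /= -sum_Ncount_after_step ?vertices_below_size_rrh //.
rewrite -(big_mkord xpredT (fun j => Ncount _ (rrh_step (rrh s) j) k)).
by rewrite /index_iota subn0; apply: eq_bigr => j _; rewrite rrh_rcons.
Qed.

Lemma total_count_closed n k :
  0 < k <= n -> k * k.+1 * total_count n k = (n.+1)`!.
Proof.
elim: n k => [|n IH] k; first by case: k => [|[]].
case/andP=> k_gt0 k_le; rewrite total_count_rec //.
(* Vertices keeping degree k contribute (n+1-k) (n+1)!, also for k = n+1. *)
have same_degree :
    (n.+1 - k) * (k * k.+1 * total_count n k) = (n.+1 - k) * (n.+1)`!.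
  case: (ltngtP k n.+1) => [k_lt|k_gt|->]; last by rewrite subnn.
    by rewrite IH // k_gt0 -ltnS.
  by move: k_le; rewrite leqNgt k_gt.
(* Vertices entering degree k contribute 2 (n+1)! from the new vertex if
   k = 1, and (k+1) (n+1)! from degree k-1 >= 1 otherwise. *)
case: k k_gt0 k_le same_degree => [|[|k]] // _ k_le same_degree.
  rewrite /= mul0n add0n muln1 [(n.+2)`!]factS.
  transitivity ((n.+1 - 1) * (1 * 2 * total_count n 1) + 2 * (n.+1 * n`!)).
    ring.
  by rewrite same_degree -factS subn1 /= -mulnDl addn2.
rewrite /= muln0 addn0 [(n.+2)`!]factS.
transitivity (k.+3 * (k.+1 * k.+2 * total_count n k.+1)
              + (n.+1 - k.+2) * (k.+2 * k.+3 * total_count n k.+2)); first ring.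
by rewrite same_degree IH ?ltnS // -mulnDl; congr (_ * _); lia.
Qed.

Lemma valid_choices_of N (f : outcome N) : valid_choices (choices_of f).
Proof.
have : choices_of f \in choice_seqs N.-1.
  by rewrite -(perm_mem (perm_choices_of N)) map_f ?mem_enum.
by rewrite mem_choice_seqs => /andP [].
Qed.

Import GRing.Theory Num.Theory.
Local Open Scope ring_scope.

Theorem mainTheorem4 (N : nat) (hN : (2 <= N)%N) :
  (forall k : nat, (1 <= k)%N -> (k <= N - 1)%N ->
     ENk N k = N%:R / (k * k.+1)%:R)
  /\ (forall f : outcome N, Ncount N (rrh_of f) N = 1%N /\ degree (rrh_of f) 0 = N).
Proof.
have N_eq : N = N.-1.+1 by rewrite prednK // ltnW.
split => [k k_gt0 k_le | f].
  have sum_eq : \sum_(f : outcome N) (Ncount N (rrh_of f) k)%:R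
                = (total_count N.-1 k)%:R :> rat.
    rewrite (@sum_over_outcomes _ _ _ N (fun s => (Ncount N (rrh s) k)%:R)).
    by rewrite natr_sum -N_eq.
  have card_eq : #|outcome N| = N.-1`!.
    rewrite -sum1_card (@sum_over_outcomes _ _ _ N (fun=> 1%N)).
    by rewrite sum_const_choice_seqs mul1n.
  have k_range : (0 < k <= N.-1)%N by rewrite k_gt0 -subn1.
  have closed := total_count_closed _ _ k_range; rewrite -N_eq in closed.
  rewrite /ENk sum_eq card_eq; apply/eqP.
  rewrite eqr_div ?pnatr_eq0 -?lt0n ?fact_gt0 ?muln_gt0 ?k_gt0 //.
  by rewrite -!natrM mulnC closed N_eq factS.
have [deg0 top] := Ncount_top_degree _ (valid_choices_of _ f).
by rewrite size_choices_of -N_eq in deg0 top; rewrite /rrh_of deg0 top.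
Qed.
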